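(* Let $K$ be an algebraically closed field with a nontrivial non-Archimedean valuation. (i) For $n=1$, for every finite quiver $Q$, every $Q$-representation $R$ with $R_i=K^1$ for all vertices $i$, and every dimension vector $\mathbf{d}$, one has $\operatorname{QDr}(R,\mathbf{d};1)=\overline{\operatorname{trop}}(\operatorname{QGr}(R,\mathbf{d};1))$. (ii) For every $n\ge2$, for every finite quiver $Q$, $Q$-representation $R$ with $R_i=K^n$ and dimension vector $\mathbf{d}$, one has $\overline{\operatorname{trop}}(\operatorname{QGr}(R,\mathbf{d};n))\subseteq\operatorname{QDr}(R,\mathbf{d};n)$, and there exist a finite quiver $Q$, a $Q$-representation $R$ with $R_i=K^n$, and a dimension vector $\mathbf{d}$ for which this containment is strict.
   Context: A finite quiver $Q=(V,A,s,t)$; a $Q$-representation $R$ assigns $R_i=K^n$ to each vertex and a matrix $A^{\alpha}\in K^{n\times n}$ to each arrow $\alpha$. A dimension vector is $\mathbf{d}=(d_i)_{i\in V}$ with $0\le d_i\le n$. A subrepresentation consists of subspaces $N_i\subseteq K^n$ with $A^\alpha N_{s(\alpha)}\subseteq N_{t(\alpha)}$. $\operatorname{QGr}(R,\mathbf{d};n)$ is the set of subrepresentations with $\dim N_i=d_i$, embedded in $\prod_i\mathbb{P}^{\binom{n}{d_i}-1}$ via Plücker coordinates; $\overline{\operatorname{trop}}(\operatorname{QGr}(R,\mathbf{d};n))$ is the Euclidean closure in $\prod_i\mathbb{P}(\mathbb{T}^{\binom{n}{d_i}})$ of the coordinatewise valuations of its points, where $\mathbb{T}=\mathbb{R}\cup\{\infty\}$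 and $\mathbb{P}(\mathbb{T}^N)=(\mathbb{T}^N\setminus\{(\infty,\dots,\infty)\})/\mathbb{R}\mathbf{1}$. Quiver Dressian $\operatorname{QDr}(R,\mathbf{d};n)$: tuples $(p^{(i)})_{i\in V}$, $p^{(i)}\in\mathbb{P}(\mathbb{T}^{\binom{n}{d_i}})$, such that for each vertex $i$ ($r=d_i$) and all $I\in\binom{[n]}{r-1}$, $J\in\binom{[n]}{r+1}$ the minimum $\min_{j\in J\setminus I}(p^{(i)}_{I\cup j}+p^{(i)}_{J\setminus j})$ is attained at least twice, and for each arrow $\alpha$ ($r=d_{s(\alpha)}$, $s=d_{t(\alpha)}$) and all $I\in\binom{[n]}{r-1}$, $J\in\binom{[n]}{s+1}$ the minimum $\min_{j\in[n]\setminus I,i\in J}(\mathrm{val}(A^{\alpha}_{i,j})+p^{(s(\alpha))}_{I\cup j}+p^{(t(\alpha))}_{J\setminus i})$ is attained at least twice (a minimum equal to $\infty$ counts as attained twice). These are the tropicalizations of the Grassmann–Plücker relations and of the quiver Plücker relations $\sum_{j\in[n]\setminus I,i\in J}\pm(A^\alpha)_{i,j}p_{I\cup j}p_{J\setminus i}$, whose common zero set is $\operatorname{QGr}(R,\mathbf{d};n)$. *)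

From HB Require Import structures.
From mathcomp Require Import all_boot all_order all_algebra.
From mathcomp Require Import all_classical all_reals all_analysis.
Unset Printing Implicit Defensive.
Import Order.TTheory GRing.Theory Num.Theory.
Local Open Scope classical_set_scope.
Local Open Scope ring_scope.

Definition nontriv_nonarch_valuation {K : fieldType} {R : realType}
    (v : K -> \bar R) : Prop :=
  [/\ (forall x, v x = +oo%E <-> x = 0),
      (forall x, v x != -oo%E),
      (forall x y, v (x * y)%R = (v x + v y)%E),
      (forall x y, (Order.min (v x) (v y) <= v (x + y)%R)%E)
    & (exists x, x != 0 /\ v x != 0%E)].

(* Plücker coordinates of all vertices are gathered into one finite index type:
   pairs (vertex i, subset I of [n]) with #|I| = d_i. *)
Definition Coord (V : finType) (n : nat) (d : V -> nat) : finType :=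
  {x : V * {set 'I_n} | #|x.2| == d x.1}.

(* The Plücker coordinate p_I of the row space of B (a d x n matrix, whose rows
   form a basis of the subspace), i.e. the maximal minor on the columns in I
   (taken in increasing order). *)
Definition plucker {K : fieldType} {d n : nat} (B : 'M[K]_(d, n))
    (I : {set 'I_n}) (h : #|I| = d) : K :=
  \det (\matrix_(r < d, c < d) B r (enum_val (cast_ord (esym h) c))).

(* Reading a tropical Plücker vector at (i, X); junk value +oo if #|X| != d_i
   (never used with such X below). *)
Definition pcoord {R : realType} {V : finType} {n : nat} {d : V -> nat}
    (p : Coord V n d -> \bar R) (i : V) (X : {set 'I_n}) : \bar R :=
  if insub (i, X) is Some c then p c else +oo%E.

Definition min_twice {R : realType} {T : finType} (P : pred T) (f : T -> \bar R) :
    Prop :=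
  let m := \big[Order.min/+oo%E]_(t | P t) f t in
  m = +oo%E \/
  exists t1 t2, [/\ t1 != t2, P t1, P t2, f t1 = m & f t2 = m].

(* The ambient space: tuples (p^(i))_i with p^(i) in T^{binom(n,d_i)} \ {(oo,..,oo)}
   (representatives of points of prod_i P(T^{binom(n,d_i)})). *)
Definition tropproj {R : realType} {V : finType} {n : nat} {d : V -> nat} :
    set (Coord V n d -> \bar R) :=
  [set p | (forall x, p x != -oo%E) /\
           (forall i : V, exists x : Coord V n d, (val x).1 = i /\ p x != +oo%E)].

(* Quiver Dressian (as a set of representatives; it is invariant under
   adding a real constant to each p^(i)). *)
Definition QDr {K : fieldType} {R : realType} (v : K -> \bar R)
    {V Arr : finType} (src tgt : Arr -> V) {n : nat} (A : Arr -> 'M[K]_n)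
    (d : V -> nat) : set (Coord V n d -> \bar R) :=
  [set p | tropproj p /\
    (forall (i : V) (I J : {set 'I_n}), #|I|.+1 = d i -> #|J| = (d i).+1 ->
       min_twice (fun j : 'I_n => (j \in J) && (j \notin I))
         (fun j => pcoord p i (j |: I) + pcoord p i (J :\ j))%E) /\
    (forall (a : Arr) (I J : {set 'I_n}),
       #|I|.+1 = d (src a) -> #|J| = (d (tgt a)).+1 ->
       min_twice (fun ji : 'I_n * 'I_n => (ji.1 \notin I) && (ji.2 \in J))
         (fun ji => v (A a ji.2 ji.1) + pcoord p (src a) (ji.1 |: I)
                    + pcoord p (tgt a) (J :\ ji.2))%E)].

Definition plucker_vec {K : fieldType} {V : finType} {n : nat} {d : V -> nat}
    (B : forall i : V, 'M[K]_(d i, n)) (x : Coord V n d) : K :=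
  plucker (B (val x).1) (val x).2 (eqP (valP x)).

(* Tropicalization of QGr(R,d;n): coordinatewise valuations of the Plücker
   coordinates of subrepresentations (N_i = row space of B_i, of dimension d_i;
   A^a N_{s(a)} ⊆ N_{t(a)} in column-vector convention, i.e.
   rowspace(B_s * (A^a)^T) ⊆ rowspace(B_t)), up to a real shift per vertex. *)
Definition tropQGr {K : fieldType} {R : realType} (v : K -> \bar R)
    {V Arr : finType} (src tgt : Arr -> V) {n : nat} (A : Arr -> 'M[K]_n)
    (d : V -> nat) : set (Coord V n d -> \bar R) :=
  [set p | exists (B : forall i : V, 'M[K]_(d i, n)) (c : V -> R),
    [/\ (forall i, row_free (B i)),
        (forall a, (B (src a) *m (A a)^T <= B (tgt a))%MS)
      & (forall x, p x = (v (plucker_vec B x) + (c (val x).1)%:E)%E)]].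

(* Euclidean closure inside prod_i P(T^{binom(n,d_i)}); since tropQGr is
   invariant under the shifts and the quotient map is open, this is the
   preimage of the closure in the quotient. *)
Definition tropQGr_closure {K : fieldType} {R : realType} (v : K -> \bar R)
    {V Arr : finType} (src tgt : Arr -> V) {n : nat} (A : Arr -> 'M[K]_n)
    (d : V -> nat) : set (Coord V n d -> \bar R) :=
  @closure {ptws Coord V n d -> \bar R} (tropQGr v src tgt A d) `&` @tropproj R V n d.

From HB Require Import structures.
From mathcomp Require Import all_boot all_order all_algebra.
From mathcomp Require Import all_classical all_reals all_analysis.
From mathcomp Require Import perm ring lra.
Import Order.TTheory GRing.Theory Num.Theory.
Local Open Scope classical_set_scope.
Local Open Scope ring_scope.

(* Containment: the Grassmann-Plücker and quiver Plücker relations are signed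
   sums of products of Plücker coordinates which vanish on every
   subrepresentation.  Since the valuation is non-Archimedean, the minimal
   valuation among the terms of a vanishing sum is attained twice, and this
   survives passing to the closure because every tropical term depends
   continuously on the tropical point.

   n = 1: every vertex carries a single Plücker coordinate, which is finite, so
   a point of the Dressian is realised by the subspaces 0 or K of the right
   dimensions; the only condition, that an arrow from K to 0 must vanish, is
   exactly the one-term quiver relation.

   n >= 2: one vertex with a loop acting by diag(1, c, 0, ..., 0), where
   v c = 0 and c <> 1, and d = 1.  The point with value 0 on e_0, e_1 and +oo
   elsewhere satisfies all tropical relations, but a realisable point close to
   it is a line spanned by an eigenvector with nonzero e_0 and e_1
   coordinates, which forces c = 1. *)

Section PluckerRelations.
Context {K : fieldType}.

Definition set_enum {n r} {S : {set 'I_n}} (h : #|S| = r) (c : 'I_r) : 'I_n :=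
  enum_val (cast_ord (esym h) c).

Lemma set_enum_inj {n r} {S : {set 'I_n}} (h : #|S| = r) : injective (set_enum h).
Proof. by move=> a b /enum_val_inj /cast_ord_inj. Qed.

Lemma set_enum_mem {n r} {S : {set 'I_n}} (h : #|S| = r) c : set_enum h c \in S.
Proof. exact: enum_valP. Qed.

Lemma set_enumP {n r} {S : {set 'I_n}} (h : #|S| = r) j :
  j \in S -> exists c, set_enum h c = j.
Proof.
move=> jS; exists (cast_ord h (enum_rank_in jS j)).
by rewrite /set_enum cast_ordK enum_rankK_in.
Qed.

Lemma pluckerE {r n} (B : 'M[K]_(r, n)) (S : {set 'I_n}) (h : #|S| = r) :
  plucker B S h = \det (colsub (set_enum h) B).
Proof. by congr (\det _); apply/matrixP => a b; rewrite !mxE. Qed.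

Lemma det_colsub_plucker {r n} (B : 'M[K]_(r, n)) (S : {set 'I_n}) (h : #|S| = r)
    (f : 'I_r -> 'I_n) :
  injective f -> (forall c, f c \in S) ->
  exists k : nat, \det (colsub f B) = (-1) ^+ k * plucker B S h.
Proof.
move=> f_inj fS.
pose s c := cast_ord h (enum_rank_in (fS c) (f c)).
have sE c : set_enum h (s c) = f c by rewrite /set_enum cast_ordK enum_rankK_in.
have s_inj : injective s by move=> a b e; apply: f_inj; rewrite -!sE e.
have -> : colsub f B = col_perm (perm s_inj) (colsub (set_enum h) B).
  by apply/matrixP => a b; rewrite !mxE permE sE.
exists (odd_perm (perm s_inj)^-1)%g.
by rewrite col_permE det_mulmx det_perm mulrC pluckerE.
Qed.

(* Up to sign, [plucker_ins B (set_enum hI) j] is the Plücker coordinate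
   p_{j ∪ I} of B and [plucker_del B (set_enum hJ) i] is p_{J \ i}. *)
Definition cons_col {m n} (j : 'I_n) (g : 'I_m -> 'I_n) (c : 'I_m.+1) : 'I_n :=
  if unlift ord0 c is Some c' then g c' else j.

Definition plucker_ins {m n} (B : 'M[K]_(m.+1, n)) (g : 'I_m -> 'I_n) (j : 'I_n) : K :=
  \det (colsub (cons_col j g) B).

Lemma plucker_ins_eq0 {m n} (B : 'M[K]_(m.+1, n)) g j c : g c = j -> plucker_ins B g j = 0.
Proof.
move=> gc; rewrite /plucker_ins -det_tr; apply: (@determinant_alternate _ _ _ ord0 (lift ord0 c)).
  exact: neq_lift.
by move=> k; rewrite !mxE /cons_col unlift_none liftK gc.
Qed.

Lemma plucker_ins_sign {m n} (B : 'M[K]_(m.+1, n)) {I : {set 'I_n}} (hI : #|I| = m) {j}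
    (h : #|j |: I| = m.+1) :
  j \notin I -> exists k : nat, plucker_ins B (set_enum hI) j = (-1) ^+ k * plucker B (j |: I) h.
Proof.
move=> jI; apply: det_colsub_plucker => [a b|c]; rewrite /cons_col.
  case: unliftP => [a' ->|->]; case: unliftP => [b' ->|->] //.
  - by move/set_enum_inj ->.
  - by move=> e; move: jI; rewrite -e set_enum_mem.
  - by move=> e; move: jI; rewrite e set_enum_mem.
by case: unliftP => [c' _|_]; rewrite !inE ?eqxx ?set_enum_mem ?orbT.
Qed.

Lemma plucker_ins_submx {m n} (B : 'M[K]_(m.+1, n)) g :
  (\row_j plucker_ins B g j <= B)%MS.
Proof.
apply/submxP; exists (\row_l ((-1) ^+ l * \det (row' l (colsub g B)))).
apply/rowP => j; rewrite !mxE /plucker_ins (expand_det_col _ ord0).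
apply: eq_bigr => l _; rewrite !mxE /cons_col unlift_none /cofactor addn0 mulrC.
by congr (_ * \det _ * _); apply/matrixP => a b; rewrite !mxE liftK.
Qed.

Lemma det_colsub_col_mx {s n} (y : 'rV[K]_n) (B : 'M[K]_(s, n)) (f : 'I_s.+1 -> 'I_n) :
  \det (colsub f (col_mx y B)) =
  \sum_k y 0 (f k) * ((-1) ^+ k * \det (colsub (f \o lift k) B)).
Proof.
rewrite (expand_det_row _ ord0); apply: eq_bigr => k _.
have -> : ord0 = lshift s (0 : 'I_1) by exact: val_inj.
rewrite [X in X * _]mxE col_mxEu /cofactor; congr (_ * (_ * \det _)).
apply/matrixP => a b; rewrite !mxE.
have -> : lift (lshift s (ord0 : 'I_1)) a = rshift 1 (a : 'I_s) by exact: val_inj.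
case: splitP => i /= ei; first by have := ltn_ord i; rewrite -ei.
by have -> : i = a by apply/val_inj/(@addnI 1)/esym.
Qed.

(* The s+1 rows of [col_mx y B] lie in the row space of B, of rank <= s. *)
Lemma det_colsub_col_mx_eq0 {s n} (y : 'rV[K]_n) (B : 'M[K]_(s, n)) (f : 'I_s.+1 -> 'I_n) :
  (y <= B)%MS -> \det (colsub f (col_mx y B)) = 0.
Proof.
move=> yB; apply/eqP; apply: contraTT (rank_leq_row B) => det_neq0.
have /eqP rk : row_free (colsub f (col_mx y B)).
  by rewrite row_free_unit unitmxE unitfE.
rewrite -ltnNge -add1n -rk.
apply: leq_trans (mxrankS (_ : col_mx y B <= B)%MS); last by rewrite col_mx_sub yB submx_refl.
by rewrite -{1}[col_mx y B]mulmx1 -mulmx_colsub mxrankM_maxl.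
Qed.

Definition plucker_del {s n} (B : 'M[K]_(s, n)) (e : 'I_s.+1 -> 'I_n) (i : 'I_n) : K :=
  \sum_(k | e k == i) (-1) ^+ k * \det (colsub (e \o lift k) B).

Lemma plucker_del_eq0 {s n} (B : 'M[K]_(s, n)) {J : {set 'I_n}} (hJ : #|J| = s.+1) {i} :
  i \notin J -> plucker_del B (set_enum hJ) i = 0.
Proof.
by move=> iJ; apply: big_pred0 => k; apply: contraNF iJ => /eqP <-; apply: set_enum_mem.
Qed.

Lemma plucker_del_sign {s n} (B : 'M[K]_(s, n)) {J : {set 'I_n}} (hJ : #|J| = s.+1) {i}
    (h : #|J :\ i| = s) :
  i \in J -> exists k : nat, plucker_del B (set_enum hJ) i = (-1) ^+ k * plucker B (J :\ i) h.
Proof.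
move=> iJ; have [k0 ek0] := set_enumP hJ _ iJ; subst i.
rewrite /plucker_del (big_pred1 k0) => [|k]; last by rewrite /= (inj_eq (set_enum_inj hJ)).
have [k1 ->] : exists k : nat, \det (colsub (set_enum hJ \o lift k0) B) =
    (-1) ^+ k * plucker B (J :\ set_enum hJ k0) h.
  apply: det_colsub_plucker => [a b /set_enum_inj /lift_inj //|c].
  by rewrite !inE set_enum_mem andbT (inj_eq (set_enum_inj hJ)) eq_sym neq_lift.
by exists (k0 + k1)%N; rewrite mulrA exprD.
Qed.

Lemma plucker_del_orthogonal {s n} (B : 'M[K]_(s, n)) (e : 'I_s.+1 -> 'I_n) (y : 'rV[K]_n) :
  (y <= B)%MS -> \sum_i y 0 i * plucker_del B e i = 0.
Proof.
move=> yB; rewrite -[RHS](det_colsub_col_mx_eq0 y B e yB) det_colsub_col_mx.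
rewrite (partition_big e predT) //=; apply: eq_bigr => i _.
by rewrite big_distrr; apply: eq_bigr => k /eqP <-.
Qed.

(* The vector (p_{j ∪ I})_j lies in the row space of B, so it is orthogonal
   to (p_{J \ j})_j; for the quiver relation, (p_{j ∪ I})_j A^T lies in the
   row space of Bt. *)
Lemma grassmann_plucker_relation {r n} (B : 'M[K]_(r, n)) {I J : {set 'I_n}} :
  #|I|.+1 = r -> #|J| = r.+1 ->
  exists H : 'I_n -> K, \sum_(j | (j \in J) && (j \notin I)) H j = 0 /\
    forall j (h1 : #|j |: I| = r) (h2 : #|J :\ j| = r), j \in J -> j \notin I ->
    exists k : nat, H j = (-1) ^+ k * (plucker B (j |: I) h1 * plucker B (J :\ j) h2).
Proof.
move=> hI hJ; subst r; set g := set_enum (erefl #|I|).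
exists (fun j => plucker_ins B g j * plucker_del B (set_enum hJ) j); split.
  rewrite -[RHS](plucker_del_orthogonal B (set_enum hJ) _ (plucker_ins_submx B g)).
  rewrite big_mkcond; apply: eq_bigr => j _; rewrite mxE.
  case: ifP => // /negbT; rewrite negb_and negbK => /orP[jJ | jI].
    by rewrite plucker_del_eq0 // mulr0.
  by have [c gc] := set_enumP (erefl #|I|) j jI; rewrite (plucker_ins_eq0 B g j c gc) mul0r.
move=> j h1 h2 jJ jI.
have [k1 ->] := plucker_ins_sign B (erefl #|I|) h1 jI.
have [k2 ->] := plucker_del_sign B hJ h2 jJ.
by exists (k1 + k2)%N; rewrite exprD mulrACA.
Qed.

Lemma quiver_plucker_relation {r s n} {Bs : 'M[K]_(r, n)} {Bt : 'M[K]_(s, n)}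
    {A : 'M[K]_n} {I J : {set 'I_n}} :
  (Bs *m A^T <= Bt)%MS -> #|I|.+1 = r -> #|J| = s.+1 ->
  exists H : 'I_n * 'I_n -> K, \sum_(ji | (ji.1 \notin I) && (ji.2 \in J)) H ji = 0 /\
    forall j i (h1 : #|j |: I| = r) (h2 : #|J :\ i| = s), j \notin I -> i \in J ->
    exists k : nat,
      H (j, i) = (-1) ^+ k * (A i j * plucker Bs (j |: I) h1 * plucker Bt (J :\ i) h2).
Proof.
move=> sub hI hJ; subst r; set g := set_enum (erefl #|I|).
set u := \row_j plucker_ins Bs g j.
have uA : (u *m A^T <= Bt)%MS by apply: submx_trans sub; apply/submxMr/plucker_ins_submx.
exists (fun ji => A ji.2 ji.1 * u 0 ji.1 * plucker_del Bt (set_enum hJ) ji.2); split.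
  rewrite -[RHS](plucker_del_orthogonal Bt (set_enum hJ) _ uA) big_mkcond /=; symmetry.
  under eq_bigr => i _ do rewrite mxE big_distrl /=.
  rewrite exchange_big pair_bigA; apply: eq_bigr => -[j i] _ /=; rewrite !mxE.
  rewrite [_ * A i j]mulrC; case: ifP => // /negbT; rewrite negb_and negbK => /orP[jI | iJ].
    have [c gc] := set_enumP (erefl #|I|) j jI.
    by rewrite (plucker_ins_eq0 Bs g j c gc) mulr0 mul0r.
  by rewrite plucker_del_eq0 // mulr0.
move=> j i h1 h2 jI iJ; rewrite mxE.
have [k1 ->] := plucker_ins_sign Bs (erefl #|I|) h1 jI.
have [k2 ->] := plucker_del_sign Bt hJ h2 iJ.
by exists (k1 + k2)%N; rewrite exprD; ring.
Qed.

End PluckerRelations.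

Section MinTwice.
Context {R : realType} {U : finType}.
Local Open Scope ereal_scope.
Implicit Types (P : pred U) (f : U -> \bar R).

Lemma min_twice_two_minimizers {P f} t1 t2 :
  P t1 -> P t2 -> t1 != t2 -> f t1 = f t2 -> (forall t, P t -> f t1 <= f t) ->
  min_twice P f.
Proof.
move=> Pt1 Pt2 t12 ft12 ft1_min; right; exists t1, t2.
suff -> : \big[Order.min/+oo]_(t | P t) f t = f t1 by [].
by apply/le_anti; rewrite bigmin_le_cond //= le_bigmin ?leey.
Qed.

Lemma min_twice_infty P f : (forall t, P t -> f t = +oo) -> min_twice P f.
Proof. by move=> fy; left; apply/le_anti; rewrite leey le_bigmin // => t /fy ->. Qed.

Lemma min_twice_unique {P f} t0 :
  (forall t, t = t0) -> min_twice P f -> P t0 -> f t0 = +oo.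
Proof.
move=> U1 [fy | [t1 [t2 [t12 _ _ _ _]]]] Pt0; last by rewrite (U1 t1) (U1 t2) eqxx in t12.
rewrite -fy; apply/le_anti; rewrite bigmin_le_cond // andbT.
by apply: le_bigmin => [|t _]; rewrite ?leey // (U1 t).
Qed.

Lemma not_min_twice P f : ~ min_twice P f ->
  exists t1, [/\ P t1, f t1 != +oo & forall t, P t -> t != t1 -> f t1 < f t].
Proof.
move=> nmt; set m := \big[Order.min/+oo]_(t | P t) f t.
have m_fin : m != +oo by apply: contra_not_neq nmt => m_inf; left.
have [t1 Pt1 ft1] : exists2 t1, P t1 & f t1 = m.
  case: (pickP P) => [t Pt | P0]; last by rewrite /m big_pred0 ?eqxx in m_fin.
  have [t1 Pt1 mE] := eq_bigmin t P f Pt (fun t _ => leey (f t)).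
  by exists t1 => //; exact: esym mE.
exists t1; split=> // [|t Pt tt1]; first by rewrite ft1.
rewrite lt_neqAle ft1 bigmin_le_cond // andbT.
by apply: contra_not_neq nmt => ft; right; exists t1, t; rewrite eq_sym.
Qed.

End MinTwice.

Section Valuation.
Context {K : fieldType} {R : realType} {v : K -> \bar R}.
Hypothesis hv : nontriv_nonarch_valuation v.
Local Open Scope ereal_scope.

Lemma val_eqy x : (v x = +oo) <-> (x = 0%R). Proof. by case: hv. Qed.
Lemma val_neqNy x : v x != -oo. Proof. by case: hv. Qed.
Lemma valM x y : v (x * y)%R = v x + v y. Proof. by case: hv. Qed.
Lemma valD x y : Order.min (v x) (v y) <= v (x + y)%R. Proof. by case: hv. Qed.

Lemma val0 : v 0 = +oo. Proof. exact/val_eqy. Qed.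

Lemma val_fin_num x : x != 0%R -> v x \is a fin_num.
Proof. by move=> x0; rewrite fin_numE val_neqNy; apply: contra_neq x0 => /val_eqy. Qed.

Lemma val1 : v 1 = 0.
Proof.
have := valM 1 1; rewrite mulr1 -[v 1]fineK ?val_fin_num ?oner_neq0 // -EFinD => -[v1].
by congr EFin; lra.
Qed.

Lemma valN1 : v (-1) = 0.
Proof.
have := valM (-1) (-1); rewrite mulrNN mulr1 val1.
rewrite -[v (-1)]fineK ?val_fin_num ?oppr_eq0 ?oner_neq0 // -EFinD => -[vN1].
by congr EFin; lra.
Qed.

Lemma valN x : v (- x)%R = v x.
Proof. by rewrite -mulN1r valM valN1 add0e. Qed.

Lemma val_signr k x : v ((-1) ^+ k * x)%R = v x.
Proof. by rewrite -signr_odd; case: (odd k); rewrite ?expr1 ?mulN1r ?valN ?expr0 ?mul1r. Qed.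

Lemma valV x : x != 0%R -> v x^-1 = - v x.
Proof.
move=> x0; have := valM x x^-1; rewrite mulfV // val1.
rewrite -[v x]fineK ?val_fin_num // -[v x^-1]fineK ?val_fin_num ?invr_eq0 //.
by rewrite -EFinD => -[] /esym/eqP; rewrite addrC addr_eq0 => /eqP ->.
Qed.

Lemma valD_lt x y : v x < v y -> v (x + y)%R = v x.
Proof.
move=> xy; apply/le_anti; apply/andP; split; last first.
  by apply: le_trans (valD x y); rewrite le_min lexx ltW.
have := valD (x + y) (- y); rewrite addrK valN ge_min => /orP[//|].
by rewrite leNgt xy.
Qed.

Lemma val_sum {I : finType} (P : pred I) (H : I -> K) :
  \big[Order.min/+oo]_(t | P t) v (H t) <= v (\sum_(t | P t) H t)%R.
Proof.
elim/big_ind2: _ => [|x a y b xa yb|//]; first by rewrite val0.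
by apply: le_trans (valD x y); rewrite le_min !ge_min xa yb orbT.
Qed.

Lemma exists_val0_neq1 : exists c : K, c != 1%R /\ v c = 0.
Proof.
have [t [t0 vt_gt0]] : exists t : K, t != 0%R /\ 0 < v t.
  have [x [x0 vx0]] : exists x, x != 0%R /\ v x != 0 by case: hv.
  have [vx_lt0 | vx_gt0 | /eqP] := ltgtP (v x) 0; last by rewrite (negbTE vx0).
    by exists x^-1%R; rewrite invr_eq0 valV // oppe_gt0.
  by exists x.
exists (1 + t)%R; split.
  by apply: contra t0; rewrite -subr_eq0 addrC addKr.
by rewrite valD_lt val1.
Qed.

(* A unique term of least valuation would have the valuation of the whole sum,
   which is +oo. *)
Lemma min_twice_val_sum_eq0 {I : finType} (P : pred I) (H : I -> K) (c : R)
    (f : I -> \bar R) :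
  (\sum_(t | P t) H t = 0)%R -> (forall t, P t -> f t = v (H t) + c%:E) -> min_twice P f.
Proof.
move=> H0 fE; apply: contrapT => /not_min_twice [t1 [Pt1 ft1 t1_min]].
have vH_fin : v (H t1) != +oo by apply: contra_neq ft1; rewrite fE // => ->.
have : v (H t1) < \big[Order.min/+oo]_(t | P t && (t != t1)) v (H t).
  apply: lt_bigmin; first by rewrite ltey.
  by move=> t /andP[Pt tt1]; have := t1_min t Pt tt1; rewrite !fE // lteD2rE.
apply/negP; rewrite -leNgt; apply: le_trans (val_sum _ H) _.
move: H0; rewrite (bigD1 t1) //= addrC => /eqP; rewrite addr_eq0 => /eqP ->.
by rewrite valN.
Qed.

End Valuation.

Section ClosureMinTwice.
Context {R : realType}.
Local Open Scope ereal_scope.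

Lemma ereal_real_between (x y : \bar R) : x < y -> exists r : R, x < r%:E < y.
Proof.
case: x => [a| |]; case: y => [b| |] //= xy.
- by exists ((a + b) / 2)%R; rewrite !lte_fin !midf_lt.
- by exists (a + 1)%R; rewrite lte_fin ltrDl ltr01 ltry.
- by exists (b - 1)%R; rewrite lte_fin gtrDl oppr_lt0 ltr01 ltNyr.
- by exists 0%R; rewrite ltry ltNyr.
Qed.

Lemma near_continuous_gt {X : topologicalType} {f : X -> \bar R} {x r} :
  {for x, continuous f} -> r < f x -> \forall y \near x, r < f y.
Proof.
move=> fc rf; apply: (near_fun f x (fun y => r < y) fc); apply: open_nbhs_nbhs.
by split=> //; exact: open_ereal_gt_ereal.
Qed.

Lemma near_continuous_lt {X : topologicalType} {f : X -> \bar R} {x r} :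
  {for x, continuous f} -> f x < r -> \forall y \near x, f y < r.
Proof.
move=> fc rf; apply: (near_fun f x (fun y => y < r) fc); apply: open_nbhs_nbhs.
by split=> //; exact: open_ereal_lt_ereal.
Qed.

Lemma continuous_at_adde {X : topologicalType} (f g : X -> \bar R) x :
  f x != -oo -> g x != -oo -> {for x, continuous f} -> {for x, continuous g} ->
  {for x, continuous (fun y => f y + g y)}.
Proof.
move=> fx gx fc gc; apply: cvgeD => //.
by apply: ltninfty_adde_def; rewrite inE /= ltNye.
Qed.

(* A unique strict minimiser at p persists near p, hence at a point of S. *)
Lemma closure_min_twice {X : topologicalType} {U : finType} (S : set X) (P : pred U)
    (F : X -> U -> \bar R) (p : X) :
  closure S p -> (forall u, {for p, continuous (F^~ u)}) ->
  (forall q, S q -> min_twice P (F q)) -> min_twice P (F p).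
Proof.
move=> Sp Fc S_mt; apply: contrapT => /not_min_twice [t1 [Pt1 Ft1 t1_min]].
have [r /andP[t1_r r_rest]] : exists r : R,
    F p t1 < r%:E < \big[Order.min/+oo]_(t | P t && (t != t1)) F p t.
  apply: ereal_real_between; apply: lt_bigmin; first by rewrite ltey.
  by move=> t /andP[]; exact: t1_min.
have near_t1 : \forall q \near p, F q t1 < r%:E by exact: near_continuous_lt.
have near_rest : \forall q \near p, forall t, P t && (t != t1) -> r%:E < F q t.
  apply: filter_forall => t; case: (boolP (P t && (t != t1))) => [Pt|_]; last exact: nearW.
  have r_Ft : r%:E < F p t by apply: lt_le_trans r_rest _; exact: bigmin_le_cond.
  by apply: filterS (near_continuous_gt (Fc t) r_Ft) => q + _.
have [q [Sq [q_t1 q_rest]]] := Sp _ (filterI near_t1 near_rest).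
have [u [Pu ut1 Fqu]] : exists u, [/\ P u, u != t1 &
    F q u = \big[Order.min/+oo]_(t | P t) F q t].
  case: (S_mt q Sq) => [min_inf | [u1 [u2 [u12 Pu1 Pu2 Fu1 Fu2]]]].
    by have := le_lt_trans (bigmin_le_cond +oo (F q) Pt1) q_t1; rewrite min_inf.
  by have [<-|] := eqVneq u1 t1; [exists u2; rewrite eq_sym | exists u1].
have := q_rest u; rewrite Pu ut1 => /(_ isT); apply/negP; rewrite -leNgt Fqu.
exact: le_trans (bigmin_le_cond +oo (F q) Pt1) (ltW q_t1).
Qed.

End ClosureMinTwice.

Section Containment.
Context {K : fieldType} {R : realType} {v : K -> \bar R}.
Hypothesis hv : nontriv_nonarch_valuation v.
Context {V Arr : finType} {src tgt : Arr -> V} {n : nat} {A : Arr -> 'M[K]_n} {d : V -> nat}.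
Local Open Scope ereal_scope.

Lemma pcoord_continuous i X :
  continuous (fun q : {ptws Coord V n d -> \bar R} => pcoord q i X).
Proof.
by rewrite /pcoord; case: insub => [x|]; [exact: proj_continuous | exact: cst_continuous].
Qed.

Lemma pcoord_neqNy (p : Coord V n d -> \bar R) i X :
  (forall x, p x != -oo) -> pcoord p i X != -oo.
Proof. by rewrite /pcoord; case: insub. Qed.

Lemma pcoord_plucker_vec {B : forall i, 'M[K]_(d i, n)} {c : V -> R} {q} :
  (forall x, q x = v (plucker_vec B x) + (c (val x).1)%:E) ->
  forall i (X : {set 'I_n}) (h : #|X| = d i), pcoord q i X = v (plucker (B i) X h) + (c i)%:E.
Proof.
move=> qE i X h; rewrite /pcoord; case: insubP => [x _ xE|]; last by rewrite /= h eqxx.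
rewrite qE /plucker_vec; case: x xE => -[i' X'] hx /= [ei eX]; subst i' X'.
by congr (v _ + _); congr plucker; exact: eq_irrelevance.
Qed.

Lemma tropQGr_min_twice_GP q : tropQGr v src tgt A d q ->
  forall i (I J : {set 'I_n}), #|I|.+1 = d i -> #|J| = (d i).+1 ->
  min_twice (fun j => (j \in J) && (j \notin I))
    (fun j => pcoord q i (j |: I) + pcoord q i (J :\ j)).
Proof.
move=> [B [c [_ _ qE]]] i I J hI hJ.
have [H [H0 HE]] := grassmann_plucker_relation (B i) hI hJ.
apply: (min_twice_val_sum_eq0 hv _ H (c i + c i)%R _ H0) => j /andP[jJ jI].
have h1 : #|j |: I| = d i by rewrite cardsU1 jI -hI.
have h2 : #|J :\ j| = d i by apply/eqP; rewrite -eqSS -hJ (cardsD1 j J) jJ.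
have [k ->] := HE j h1 h2 jJ jI.
rewrite (val_signr hv) (valM hv) (pcoord_plucker_vec qE _ _ h1) (pcoord_plucker_vec qE _ _ h2).
by rewrite EFinD addeACA.
Qed.

Lemma tropQGr_min_twice_quiver q : tropQGr v src tgt A d q ->
  forall a (I J : {set 'I_n}), #|I|.+1 = d (src a) -> #|J| = (d (tgt a)).+1 ->
  min_twice (fun ji : 'I_n * 'I_n => (ji.1 \notin I) && (ji.2 \in J))
    (fun ji => v (A a ji.2 ji.1) + pcoord q (src a) (ji.1 |: I)
               + pcoord q (tgt a) (J :\ ji.2)).
Proof.
move=> [B [c [_ sub qE]]] a I J hI hJ.
have [H [H0 HE]] := quiver_plucker_relation (sub a) hI hJ.
apply: (min_twice_val_sum_eq0 hv _ H (c (src a) + c (tgt a))%R _ H0) => -[j i] /andP[/= jI iJ].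
have h1 : #|j |: I| = d (src a) by rewrite cardsU1 jI -hI.
have h2 : #|J :\ i| = d (tgt a) by apply/eqP; rewrite -eqSS -hJ (cardsD1 i J) iJ.
have [k ->] := HE j i h1 h2 jI iJ.
rewrite (val_signr hv) !(valM hv) (pcoord_plucker_vec qE _ _ h1) (pcoord_plucker_vec qE _ _ h2).
by rewrite EFinD !addeA; congr (_ + _); rewrite addeAC.
Qed.

Lemma tropQGr_closure_sub_QDr : tropQGr_closure v src tgt A d `<=` QDr v src tgt A d.
Proof.
move=> p [p_cl p_proj]; have pNy : forall x, p x != -oo by case: p_proj.
have pcoordNy i X : pcoord p i X != -oo by exact: pcoord_neqNy.
split; [exact: p_proj | split] => [i I J hI hJ | a I J hI hJ].
  apply: (@closure_min_twice _ {ptws Coord V n d -> \bar R} _ (tropQGr v src tgt A d) _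
    (fun q j => pcoord q i (j |: I) + pcoord q i (J :\ j)) p p_cl).
    by move=> j; apply: continuous_at_adde; rewrite ?pcoordNy //; exact: pcoord_continuous.
  by move=> q /tropQGr_min_twice_GP; apply.
apply: (@closure_min_twice _ {ptws Coord V n d -> \bar R} _ (tropQGr v src tgt A d) _
  (fun q ji => v (A a ji.2 ji.1) + pcoord q (src a) (ji.1 |: I) + pcoord q (tgt a) (J :\ ji.2))
  p p_cl); last by move=> q /tropQGr_min_twice_quiver; apply.
move=> ji; apply: continuous_at_adde; rewrite ?pcoordNy //; last exact: pcoord_continuous.
  by rewrite adde_eq_ninfty negb_or (val_neqNy hv) pcoordNy.
apply: continuous_at_adde; rewrite ?(val_neqNy hv) ?pcoordNy //.
  exact: cst_continuous.
exact: pcoord_continuous.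
Qed.

End Containment.

Lemma card_set_I1 (X : {set 'I_1}) : #|X| = (ord0 \in X).
Proof.
case: (boolP (ord0 \in X)) => X0.
  rewrite (_ : X = [set: 'I_1]%SET) ?cardsT ?card_ord //.
  by apply/setP => j; rewrite (ord1 j) X0 inE.
rewrite (_ : X = finset.set0) ?cards0 //.
by apply/setP => j; rewrite (ord1 j) (negbTE X0) inE.
Qed.

Lemma set_I1_inj (X Y : {set 'I_1}) : #|X| = #|Y| -> X = Y.
Proof.
rewrite !card_set_I1 => XY; apply/setP => j; rewrite (ord1 j).
by case: (ord0 \in X) XY; case: (ord0 \in Y).
Qed.

Lemma plucker_const1 {K : fieldType} m (X : {set 'I_1}) (h : #|X| = m) :
  (m <= 1)%N -> plucker (const_mx 1 : 'M[K]_(m, 1)) X h = 1.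
Proof. by case: m h => [|[|m]] h hm //; rewrite /plucker ?det_mx00 // det_mx11 !mxE. Qed.

Lemma plucker_row1 {K : fieldType} {n} (B : 'M[K]_(1, n)) k (h : #|[set k]%SET| = 1%N) :
  plucker B [set k]%SET h = B 0 k.
Proof.
rewrite /plucker det_mx11 mxE.
by have := enum_valP (cast_ord (esym h) 0); rewrite inE => /eqP ->.
Qed.

Lemma row_free_const1 {K : fieldType} m : (m <= 1)%N -> row_free (const_mx 1 : 'M[K]_(m, 1)).
Proof.
case: m => [|[|]] // _; last by rewrite row_free_unit unitmxE det_mx11 mxE unitr1.
by rewrite /row_free eqn0Ngt -leqNgt rank_leq_row.
Qed.

Lemma pcoord_val {R : realType} {V : finType} {n : nat} {d : V -> nat}
    (p : Coord V n d -> \bar R) x :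
  pcoord p (val x).1 (val x).2 = p x.
Proof. by rewrite /pcoord -surjective_pairing valK. Qed.

Section DimensionOne.
Context {K : fieldType} {R : realType} {v : K -> \bar R}.
Hypothesis hv : nontriv_nonarch_valuation v.
Context {V Arr : finType} {src tgt : Arr -> V} {A : Arr -> 'M[K]_1} {d : V -> nat}.
Hypothesis d_le1 : forall i, (d i <= 1)%N.
Local Open Scope ereal_scope.

Lemma Coord1_inj {x y : Coord V 1 d} : (val x).1 = (val y).1 -> x = y.
Proof.
case: x => -[i X] hX; case: y => -[j Y] hY /= ij; subst j.
by apply: val_inj; congr pair; apply: set_I1_inj; rewrite (eqP hX) (eqP hY).
Qed.

Lemma tropproj1_fin_num (p : Coord V 1 d -> \bar R) :
  tropproj p -> forall x : Coord V 1 d, p x \is a fin_num.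
Proof.
move=> [pNy p_fin] x; have [y [yx py]] := p_fin (val x).1.
by rewrite fin_numE pNy -(Coord1_inj yx).
Qed.

Lemma pcoord1_fin_num (p : Coord V 1 d -> \bar R) i (X : {set 'I_1}) :
  tropproj p -> #|X| = d i -> pcoord p i X \is a fin_num.
Proof.
move=> pp h; rewrite /pcoord; case: insubP => [x _ _|]; first exact: tropproj1_fin_num.
by rewrite /= h eqxx.
Qed.

Lemma QDr1_arrow_eq0 {p} a :
  QDr v src tgt A d p -> d (src a) = 1%N -> d (tgt a) = 0%N -> A a ord0 ord0 = 0%R.
Proof.
move=> [pp [_ p_quiver]] ds dt.
have hI : #|(finset.set0 : {set 'I_1})|.+1 = d (src a) by rewrite cards0 ds.
have hJ : #|[set: 'I_1]%SET| = (d (tgt a)).+1 by rewrite cardsT card_ord dt.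
have I1_pair (t : 'I_1 * 'I_1) : t = (ord0, ord0) by case: t => j i; rewrite !ord1.
have := min_twice_unique (ord0, ord0) I1_pair (p_quiver a _ _ hI hJ).
rewrite !inE /= => /(_ isT) Ay.
have f1 : pcoord p (src a) (ord0 |: finset.set0) \is a fin_num.
  by apply: pcoord1_fin_num; rewrite // card_set_I1 !inE eqxx ds.
have f2 : pcoord p (tgt a) ([set: 'I_1]%SET :\ ord0) \is a fin_num.
  by apply: pcoord1_fin_num; rewrite // card_set_I1 !inE eqxx dt.
apply/(val_eqy hv); apply/eqP; apply: contraTT isT => vA_fin.
have : v (A a ord0 ord0) + pcoord p (src a) (ord0 |: finset.set0)
  + pcoord p (tgt a) ([set: 'I_1]%SET :\ ord0) \isn't a fin_num by rewrite Ay.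
by rewrite !fin_numD f1 f2 !andbT fin_numE (val_neqNy hv) vA_fin.
Qed.

Let coord_set i : {set 'I_1} := [set _ | d i == 1%N].

Lemma card_coord_set i : #|coord_set i| = d i.
Proof. by rewrite card_set_I1 inE; case: (d i) (d_le1 i) => [|[|]]. Qed.

Lemma QDr1_sub_tropQGr : QDr v src tgt A d `<=` tropQGr v src tgt A d.
Proof.
move=> p pQ; have pp : tropproj p by case: pQ.
have d01 i : d i = 0%N \/ d i = 1%N by case: (d i) (d_le1 i) => [|[|]]; [left|right|].
exists (fun i => const_mx 1%R : 'M[K]_(d i, 1)), (fun i => fine (pcoord p i (coord_set i))); split.
- by move=> i; apply: row_free_const1.
- move=> a; have [dt0|dt1] := d01 (tgt a); last first.
    apply: submx_full; have /eqP rk := @row_free_const1 K _ (d_le1 (tgt a)).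
    by rewrite /row_full rk dt1.
  suff -> : (const_mx 1%R : 'M[K]_(d (src a), 1)) *m (A a)^T = 0%R by exact: sub0mx.
  apply/matrixP => r k; rewrite !mxE big_ord1 !mxE (ord1 k).
  have [ds0|ds1] := d01 (src a); first by have := ltn_ord r; rewrite [X in (_ < X)%N]ds0.
  by rewrite (QDr1_arrow_eq0 a pQ ds1 dt0) mulr0.
- move=> x; rewrite /plucker_vec plucker_const1 ?d_le1 // (val1 hv) add0e.
  have -> : coord_set (val x).1 = (val x).2.
    by apply: set_I1_inj; rewrite card_coord_set; apply/esym/eqP/(valP x).
  by rewrite pcoord_val fineK // tropproj1_fin_num.
Qed.

Lemma QDr1_eq_tropQGr_closure : QDr v src tgt A d = tropQGr_closure v src tgt A d.
Proof.
apply/seteqP; split; last exact: (tropQGr_closure_sub_QDr hv (n := 1)).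
move=> p pQ; split; last by case: pQ.
exact/subset_closure/QDr1_sub_tropQGr.
Qed.

End DimensionOne.

Section Counterexample.
Context {K : fieldType} {R : realType} {v : K -> \bar R}.
Hypothesis hv : nontriv_nonarch_valuation v.
Context {n : nat} {c0 : K}.
Hypotheses (c0_neq1 : c0 != 1%R) (vc0 : v c0 = 0%E).
Local Close Scope classical_set_scope.
Local Open Scope ereal_scope.

Let i0 : 'I_n.+2 := ord0.
Let i1 : 'I_n.+2 := lift ord0 ord0.
Let S : {set 'I_n.+2} := [set i0; i1].
Let loop : unit -> unit := fun _ => tt.
Let d : unit -> nat := fun _ => 1%N.
Let w (i : 'I_n.+2) : K := if i == i0 then 1%R else if i == i1 then c0 else 0%R.
Let A : unit -> 'M[K]_n.+2 := fun _ => diag_mx (\row_i w i).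
Let p : Coord unit n.+2 d -> \bar R := fun x => if (val x).2 \subset S then 0 else +oo.

Lemma i0_neq_i1 : i0 != i1. Proof. exact: neq_lift. Qed.

Lemma p_pcoordE X : pcoord p tt X = if (#|X| == 1%N) && (X \subset S) then 0 else +oo.
Proof.
rewrite /pcoord; case: insubP => [x hX xE | /negbTE hX]; last by rewrite /d hX.
by rewrite /p xE /= (eqP hX).
Qed.

Lemma p_pcoord_ge0 X : 0 <= pcoord p tt X.
Proof. by rewrite p_pcoordE; case: ifP. Qed.

Lemma A_offdiag i j : i != j -> A tt i j = 0%R.
Proof. by rewrite !mxE => /negbTE ->; rewrite mulr0n. Qed.

Lemma A_diag i : A tt i i = w i.
Proof. by rewrite !mxE eqxx mulr1n. Qed.

Lemma w_i0 : w i0 = 1%R. Proof. by rewrite /w eqxx. Qed.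
Lemma w_i1 : w i1 = c0. Proof. by rewrite /w eq_sym (negbTE i0_neq_i1) eqxx. Qed.

Lemma val_A_ge0 i j : 0 <= v (A tt i j).
Proof.
have [<-|ij] := eqVneq i j; last by rewrite A_offdiag // (val0 hv) leey.
rewrite A_diag /w; case: ifP => _; first by rewrite (val1 hv).
by case: ifP => _; rewrite ?vc0 ?(val0 hv) ?leey.
Qed.

Lemma S_i0 : i0 \in S. Proof. by rewrite !inE eqxx. Qed.
Lemma S_i1 : i1 \in S. Proof. by rewrite !inE eqxx orbT. Qed.

Lemma p_pcoord_neqNy X : pcoord p tt X != -oo.
Proof. by rewrite p_pcoordE; case: ifP. Qed.

Lemma p_pcoord_S {k} : k \in S -> pcoord p tt [set k] = 0 /\ pcoord p tt (S :\ k) = 0.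
Proof.
move=> kS; have SkE : #|S :\ k| = 1%N.
  by have := cardsD1 k S; rewrite kS cards2 i0_neq_i1 => -[].
by rewrite !p_pcoordE cards1 SkE finset.sub1set kS finset.subD1set.
Qed.

Lemma p_min_twice_GP (J : {set 'I_n.+2}) : #|J| = 2%N ->
  min_twice (fun j => (j \in J) && (j \notin finset.set0))
    (fun j => pcoord p tt (j |: finset.set0) + pcoord p tt (J :\ j)).
Proof.
move=> hJ; have [a [b [ab aJ bJ]]] : exists a b, [/\ a != b, a \in J & b \in J].
  by move/eqP/cards2P: hJ => [a [b [ab ->]]]; exists a, b; rewrite !inE !eqxx orbT.
have fE j : j \in J -> pcoord p tt (j |: finset.set0) + pcoord p tt (J :\ j) =
    if J \subset S then 0 else +oo.
  move=> jJ; have hJj : #|J :\ j| = 1%N by have := cardsD1 j J; rewrite jJ hJ => -[].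
  rewrite !p_pcoordE finset.setU0 cards1 hJj -[in RHS](finset.setD1K jJ).
  rewrite finset.subUset finset.sub1set.
  by case: (j \in S); case: (J :\ j \subset S); rewrite ?adde0 ?addye.
apply: (min_twice_two_minimizers a b) => //; rewrite ?inE ?aJ ?bJ ?fE //.
by move=> t /andP[tJ _]; rewrite !fE.
Qed.

Lemma p_min_twice_quiver (J : {set 'I_n.+2}) : #|J| = 2%N ->
  min_twice (fun ji : 'I_n.+2 * 'I_n.+2 => (ji.1 \notin finset.set0) && (ji.2 \in J))
    (fun ji => v (A tt ji.2 ji.1) + pcoord p tt (ji.1 |: finset.set0)
               + pcoord p tt (J :\ ji.2)).
Proof.
move=> hJ; case sJ : (J \subset S).
  have -> : J = S by apply/eqP; rewrite eqEcard sJ cards2 i0_neq_i1 hJ.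
  apply: (min_twice_two_minimizers (i0, i0) (i1, i1)); rewrite /= ?inE ?S_i0 ?S_i1 //.
    rewrite !finset.setU0 !A_diag w_i0 w_i1 (val1 hv) vc0.
    by rewrite (p_pcoord_S S_i0).1 (p_pcoord_S S_i0).2 (p_pcoord_S S_i1).1 (p_pcoord_S S_i1).2.
  move=> t _; rewrite finset.setU0 A_diag w_i0 (val1 hv).
  rewrite (p_pcoord_S S_i0).1 (p_pcoord_S S_i0).2 !adde0.
  by rewrite adde_ge0 ?p_pcoord_ge0 // adde_ge0 ?val_A_ge0 ?p_pcoord_ge0.
apply: min_twice_infty => -[j i] /andP[/= _ iJ].
have [<-|ij] := eqVneq i j; last by rewrite A_offdiag // (val0 hv) !addye ?p_pcoord_neqNy.
case iS : (i \in S).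
  have -> : pcoord p tt (J :\ i) = +oo.
    rewrite p_pcoordE; case: ifP => // /andP[_ JiS]; move: sJ.
    by rewrite -(finset.setD1K iJ) finset.subUset finset.sub1set iS JiS.
  by rewrite addey // adde_eq_ninfty negb_or (val_neqNy hv) p_pcoord_neqNy.
have w0 : w i = 0%R by rewrite /w; move: iS; rewrite !inE; case: eqP; case: eqP.
by rewrite A_diag w0 (val0 hv) !addye ?p_pcoord_neqNy.
Qed.

Lemma p_QDr : QDr v loop loop A d p.
Proof.
split; [split=> [x|[]] | split=> -[] I J /eqP; rewrite eqSS cards_eq0 => /eqP -> hJ].
- by rewrite /p; case: ifP.
- have h : #|[set i0]| == d tt by rewrite cards1.
  by exists (Sub (tt, [set i0]) h); rewrite /p /= finset.sub1set !inE eqxx.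
- exact: p_min_twice_GP.
- exact: p_min_twice_quiver.
Qed.

Lemma p_notin_tropQGr_closure : ~ tropQGr_closure v loop loop A d p.
Proof.
move=> [p_cl _].
have near_lt1 k (hk : #|[set k]| == d tt) : k \in S ->
    \forall q \near (p : {ptws Coord unit n.+2 d -> \bar R}), q (Sub (tt, [set k]) hk) < 1%:E.
  move=> kS; apply: near_continuous_lt; first exact: proj_continuous.
  by rewrite /p /= finset.sub1set kS lte01.
have h0 : #|[set i0]| == d tt by rewrite cards1.
have h1 : #|[set i1]| == d tt by rewrite cards1.
have [q [[B [c [_ sub qE]]] [q0 q1]]] :=
  p_cl _ (@filterI _ _ (nbhs_filter _) _ _ (near_lt1 _ h0 S_i0) (near_lt1 _ h1 S_i1)).
have B_neq0 k hk : q (Sub (tt, [set k]) hk) < 1%:E -> B tt ord0 k != 0%R.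
  rewrite qE /plucker_vec /= plucker_row1; apply: contraTneq => ->.
  by rewrite (val0 hv) addye // ltNge leey.
have /submxP [D BD] := sub tt.
have eig k : (B tt ord0 k * w k = D ord0 ord0 * B tt ord0 k)%R.
  move/(congr1 (fun M : 'M[K]_(1, n.+2) => M ord0 k)): BD.
  by rewrite tr_diag_mx mul_mx_diag !mxE big_ord1.
have D1 : D ord0 ord0 = 1%R by apply: (mulIf (B_neq0 _ _ q0)); rewrite -eig w_i0 mulr1 mul1r.
move/negP: c0_neq1; apply; apply/eqP; apply: (mulIf (B_neq0 _ _ q1)).
by rewrite -D1 -eig w_i1 mulrC.
Qed.

Local Close Scope ereal_scope.
Local Open Scope classical_set_scope.

Lemma tropQGr_closure_proper_subset : exists (V Arr : finType) (src tgt : Arr -> V)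
    (A : Arr -> 'M[K]_n.+2) (d : V -> nat),
  (forall i, (d i <= n.+2)%N) /\
  tropQGr_closure v src tgt A d `<` QDr v src tgt A d.
Proof.
exists unit, unit, loop, loop, A, d; split=> //; split.
  exact: (tropQGr_closure_sub_QDr hv (n := n.+2)).
by move=> QDr_sub; apply: p_notin_tropQGr_closure; apply: QDr_sub p_QDr.
Qed.

End Counterexample.

Theorem theoremD (K : closedFieldType) (R : realType) (v : K -> \bar R)
    (hv : nontriv_nonarch_valuation v) :
  (forall (V Arr : finType) (src tgt : Arr -> V) (A : Arr -> 'M[K]_1)
          (d : V -> nat),
      (forall i, (d i <= 1)%N) ->
      QDr v src tgt A d = tropQGr_closure v src tgt A d) /\
  (forall n : nat, (2 <= n)%N ->
     (forall (V Arr : finType) (src tgt : Arr -> V) (A : Arr -> 'M[K]_n)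
             (d : V -> nat),
        (forall i, (d i <= n)%N) ->
        tropQGr_closure v src tgt A d `<=` QDr v src tgt A d) /\
     (exists (V Arr : finType) (src tgt : Arr -> V) (A : Arr -> 'M[K]_n)
             (d : V -> nat),
        (forall i, (d i <= n)%N) /\
        tropQGr_closure v src tgt A d `<` QDr v src tgt A d)).
Proof.
split=> [V Arr src tgt A d d_le1 | n n_ge2].
  exact: (QDr1_eq_tropQGr_closure hv (A := A) d_le1).
split=> [V Arr src tgt A d _ | ]; first exact: (tropQGr_closure_sub_QDr hv (n := n)).
have [c0 [c0_neq1 vc0]] := exists_val0_neq1 hv.
case: n n_ge2 => [|[|n]] // _.
exact: (tropQGr_closure_proper_subset hv (n := n) c0_neq1 vc0).
Qed.
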